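(* Let $\mathcal{V}$ be a non-trivial quantale and $\mathsf{F}\colon\mathbf{Set}\to\mathbf{Set}$ a functor. The monotone map $\mathsf{I}\colon\mathbf{Lax}(\mathsf{F})\to\mathbf{Lift}(\mathsf{F})_{\mathsf{I}}$, sending a lax extension to its induced lifting, is order-reflecting and right adjoint to the monotone map $\widehat{\mathsf{F}}^{\mathsf{M}\mathsf{P}(-)}\colon\mathbf{Lift}(\mathsf{F})_{\mathsf{I}}\to\mathbf{Lax}(\mathsf{F})$ sending a lifting $\overline{\mathsf{F}}$ to the Kantorovich extension of $\mathsf{F}$ with respect to the class of all monotone predicate liftings compatible with $\overline{\mathsf{F}}$.
   Context: A quantale $(\mathcal{V},\otimes,k)$ is a complete lattice with commutative monoid structure, each $u\otimes-$ preserving joins, $\hom(u,-)$ its right adjoint; non-trivial: $\bot\ne\top$. $\mathcal{V}$-categories $(X,a)$: $k\le a(x,x)$, $a(x,y)\otimes a(y,z)\le a(x,z)$; $\mathcal{V}$-functors: $a(x,y)\le b(f x,f y)$; initial $\mathcal{V}$-functors: equality; category $\mathbf{Cat}(\mathcal{V})$. $\mathcal{V}$-relations $r\colon X\nrightarrow Y$ are maps $X\times Y\to\mathcal{V}$, composed by $(s\cdot r)(x,z)=\bigvee_y r(x,y)\otimes s(y,z)$, with converse $r^\circ(y,x)=r(x,y)$, pointwise order, functions viewed as relations with value $k$ on the graph and $\bot$ elsewhere; $(r\multimap s)(z,y)=\bigwedge_x\hom(s(x,z),r(x,y))$ for $r\colon X\nrightarrow Y$, $s\colon X\nrightarrow Z$.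 A lax extension $\widehat{\mathsf{F}}$ of $\mathsf{F}$ maps $r\colon X\nrightarrow Y$ to $\widehat{\mathsf{F}}r\colon\mathsf{F}X\nrightarrow\mathsf{F}Y$ with (L1) monotonicity, (L2) $\widehat{\mathsf{F}}s\cdot\widehat{\mathsf{F}}r\le\widehat{\mathsf{F}}(s\cdot r)$, (L3) $\mathsf{F}f\le\widehat{\mathsf{F}}f$, $(\mathsf{F}f)^\circ\le\widehat{\mathsf{F}}(f^\circ)$; its induced lifting sends $(X,a)$ to $(\mathsf{F}X,\widehat{\mathsf{F}}a)$. $\mathbf{Lax}(\mathsf{F})$: lax extensions ordered pointwise. A lifting $\overline{\mathsf{F}}$ of $\mathsf{F}$ is a functor on $\mathbf{Cat}(\mathcal{V})$ with $|\overline{\mathsf{F}}-|=\mathsf{F}|-|$; $\mathbf{Lift}(\mathsf{F})_{\mathsf{I}}$: liftings preserving initial morphisms, ordered by $\overline{\mathsf{F}}\le\overline{\mathsf{F}}'$ iff the structure of $\overline{\mathsf{F}}(X,a)$ is pointwise below that of $\overline{\mathsf{F}}'(X,a)$ for all $(X,a)$. A $\kappa$-ary $\mathcal{V}$-valued predicate lifting is a natural transformation $\lambda\colon\mathbf{Set}(-,\mathcal{V}^\kappa)\to\mathbf{Set}(\mathsf{F}-,\mathcal{V})$, equivalently (identifying $f\colon X\to\mathcal{V}^\kappa$ with the relation $\kappa\nrightarrow X$, $(i,x)\mapsto f(x)(i)$, and maps $\mathsf{F}X\to\mathcal{V}$ with relations $1\nrightarrow\mathsf{F}X$) a natural family of maps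 from relations $\kappa\nrightarrow X$ to relations $1\nrightarrow\mathsf{F}X$; monotone if components are monotone pointwise. $\lambda$ is compatible with $\overline{\mathsf{F}}$ if $\lambda_{|X|}(f)\colon\overline{\mathsf{F}}X\to(\mathcal{V},\hom)$ is a $\mathcal{V}$-functor for every $\mathcal{V}$-functor $f\colon X\to\mathcal{V}^\kappa$ (where $\mathcal{V}^\kappa$ has structure $[f,g]=\bigwedge_i\hom(f(i),g(i))$). For a class $\Lambda$ of monotone predicate liftings, the Kantorovich extension (a lax extension of $\mathsf{F}$) is $\widehat{\mathsf{F}}^\Lambda r=\bigwedge_{\lambda\in\Lambda}\bigwedge_{g\colon\kappa\nrightarrow X}\lambda(r\cdot g)\multimap\lambda(g)$. *)

Set Implicit Arguments.

Record quantale := Quantale {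
  qcar :> Type;
  qle : qcar -> qcar -> Prop;
  qle_refl : forall x, qle x x;
  qle_trans : forall x y z, qle x y -> qle y z -> qle x z;
  qle_antisym : forall x y, qle x y -> qle y x -> x = y;
  qsup : (qcar -> Prop) -> qcar;
  qsup_ub : forall (S : qcar -> Prop) x, S x -> qle x (qsup S);
  qsup_least : forall (S : qcar -> Prop) y, (forall x, S x -> qle x y) -> qle (qsup S) y;
  qten : qcar -> qcar -> qcar;
  qk : qcar;
  qten_assoc : forall x y z, qten x (qten y z) = qten (qten x y) z;
  qten_comm : forall x y, qten x y = qten y x;
  qten_k : forall x, qten qk x = x;
  qten_sup : forall u (S : qcar -> Prop),
      qten u (qsup S) = qsup (fun v => exists x, S x /\ v = qten u x)
}.

Arguments qle {q}.
Arguments qsup {q}.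
Arguments qten {q}.
Arguments qk {q}.

Definition qbot (V : quantale) : V := qsup (fun _ => False).
Definition qtop (V : quantale) : V := qsup (fun _ => True).
Definition qinf {V : quantale} (S : V -> Prop) : V :=
  qsup (fun x => forall y, S y -> qle x y).
(** hom(u,-) : the right adjoint of u (x) - *)
Definition qhom {V : quantale} (u v : V) : V := qsup (fun w => qle (qten u w) v).

Definition nontrivial (V : quantale) : Prop := qbot V <> qtop V.

Record setfunctor := SetFunctor {
  Fob :> Type -> Type;
  Fmap : forall X Y : Type, (X -> Y) -> Fob X -> Fob Y;
  Fmap_id : forall X (t : Fob X), Fmap (fun x : X => x) t = t;
  Fmap_comp : forall X Y Z (f : X -> Y) (g : Y -> Z) (t : Fob X),
      Fmap g (Fmap f t) = Fmap (fun x => g (f x)) t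
}.
Arguments Fmap {s X Y}.

Definition vrel (V : quantale) (X Y : Type) := X -> Y -> V.

(** [vseq r s] is the composite  s . r  of r : X -/-> Y and s : Y -/-> Z *)
Definition vseq {V : quantale} {X Y Z : Type} (r : vrel V X Y) (s : vrel V Y Z)
  : vrel V X Z :=
  fun x z => qsup (fun v => exists y, v = qten (r x y) (s y z)).

Definition vconv {V : quantale} {X Y : Type} (r : vrel V X Y) : vrel V Y X :=
  fun y x => r x y.

(** a function as a V-relation: k on the graph, bottom elsewhere *)
Definition vgraph (V : quantale) {X Y : Type} (f : X -> Y) : vrel V X Y :=
  fun x y => qsup (fun v => f x = y /\ v = qk).

Definition vle {V : quantale} {X Y : Type} (r r' : vrel V X Y) : Prop :=
  forall x y, qle (r x y) (r' x y).

Definition vimp {V : quantale} {X Y Z : Type} (r : vrel V X Y) (s : vrel V X Z)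
  : vrel V Z Y :=
  fun z y => qinf (fun v => exists x, v = qhom (s x z) (r x y)).

Definition is_vcat {V : quantale} {X : Type} (a : vrel V X X) : Prop :=
  (forall x, qle qk (a x x)) /\
  (forall x y z, qle (qten (a x y) (a y z)) (a x z)).

Definition vfunctor {V : quantale} {X Y : Type} (a : vrel V X X) (b : vrel V Y Y)
  (f : X -> Y) : Prop :=
  forall x y, qle (a x y) (b (f x) (f y)).

Definition vinitial {V : quantale} {X Y : Type} (a : vrel V X X) (b : vrel V Y Y)
  (f : X -> Y) : Prop :=
  forall x y, a x y = b (f x) (f y).

Definition vhomstr (V : quantale) : vrel V V V := fun u v => qhom u v.
Definition vpow (V : quantale) (kappa : Type) : vrel V (kappa -> V) (kappa -> V) :=
  fun f g => qinf (fun v => exists i, v = qhom (f i) (g i)).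

Definition laxstr (V : quantale) (F : setfunctor) :=
  forall X Y : Type, vrel V X Y -> vrel V (F X) (F Y).

Definition is_laxext {V : quantale} {F : setfunctor} (L : laxstr V F) : Prop :=
  (forall X Y (r r' : vrel V X Y), vle r r' -> vle (L X Y r) (L X Y r')) /\
  (forall X Y Z (r : vrel V X Y) (s : vrel V Y Z),
      vle (vseq (L X Y r) (L Y Z s)) (L X Z (vseq r s))) /\
  (forall X Y (f : X -> Y),
      vle (vgraph V (Fmap (s := F) f)) (L X Y (vgraph V f)) /\
      vle (vconv (vgraph V (Fmap (s := F) f))) (L Y X (vconv (vgraph V f)))).

Definition laxext_le {V : quantale} {F : setfunctor} (L L' : laxstr V F) : Prop :=
  forall X Y (r : vrel V X Y), vle (L X Y r) (L' X Y r).

(** * Liftings of F to Cat(V): on objects, a structure on F X for every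
    structure a on X (only its values on V-categories matter); on morphisms
    the lifting acts as F. *)
Definition liftstr (V : quantale) (F : setfunctor) :=
  forall X : Type, vrel V X X -> vrel V (F X) (F X).

Definition is_lifting {V : quantale} {F : setfunctor} (Lb : liftstr V F) : Prop :=
  (forall X (a : vrel V X X), is_vcat a -> is_vcat (Lb X a)) /\
  (forall X Y (a : vrel V X X) (b : vrel V Y Y) (f : X -> Y),
      is_vcat a -> is_vcat b -> vfunctor a b f ->
      vfunctor (Lb X a) (Lb Y b) (Fmap (s := F) f)).

Definition preserves_initial {V : quantale} {F : setfunctor} (Lb : liftstr V F) : Prop :=
  forall X Y (a : vrel V X X) (b : vrel V Y Y) (f : X -> Y),
    is_vcat a -> is_vcat b -> vinitial a b f ->
    vinitial (Lb X a) (Lb Y b) (Fmap (s := F) f).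

Definition is_lifting_I {V : quantale} {F : setfunctor} (Lb : liftstr V F) : Prop :=
  is_lifting Lb /\ preserves_initial Lb.

Definition lift_le {V : quantale} {F : setfunctor} (Lb Lb' : liftstr V F) : Prop :=
  forall X (a : vrel V X X), is_vcat a -> vle (Lb X a) (Lb' X a).

Definition induced {V : quantale} {F : setfunctor} (L : laxstr V F) : liftstr V F :=
  fun X a => L X X a.

(** * Predicate liftings: relations kappa -/-> X  to  maps F X -> V
    (= relations 1 -/-> F X) *)
Definition predlift (V : quantale) (F : setfunctor) (kappa : Type) :=
  forall X : Type, vrel V kappa X -> (F X -> V).

Definition pl_natural {V : quantale} {F : setfunctor} {kappa : Type}
  (l : predlift V F kappa) : Prop :=
  forall X Y (h : X -> Y) (g : vrel V kappa Y) (t : F X),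
    l X (fun i x => g i (h x)) t = l Y g (Fmap h t).

Definition pl_monotone {V : quantale} {F : setfunctor} {kappa : Type}
  (l : predlift V F kappa) : Prop :=
  forall X (g g' : vrel V kappa X), vle g g' -> forall t, qle (l X g t) (l X g' t).

Definition pl_compatible {V : quantale} {F : setfunctor} {kappa : Type}
  (Lb : liftstr V F) (l : predlift V F kappa) : Prop :=
  forall X (a : vrel V X X) (g : vrel V kappa X),
    is_vcat a -> vfunctor a (@vpow V kappa) (fun x i => g i x) ->
    vfunctor (Lb X a) (vhomstr V) (l X g).

Definition plclass (V : quantale) (F : setfunctor) :=
  forall kappa : Type, predlift V F kappa -> Prop.

Definition MP {V : quantale} {F : setfunctor} (Lb : liftstr V F) : plclass V F :=
  fun kappa l => pl_natural l /\ pl_monotone l /\ pl_compatible Lb l.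

(** Kantorovich extension:
    F^Lambda r = /\_{lambda in Lambda} /\_{g : kappa -/-> X} lambda(r . g) -o lambda(g) *)
Definition kantorovich {V : quantale} {F : setfunctor} (Lam : plclass V F) : laxstr V F :=
  fun X Y r s t =>
    qinf (fun v => exists (kappa : Type) (l : predlift V F kappa) (g : vrel V kappa X),
      Lam kappa l /\
      v = vimp (fun (_ : unit) => l Y (vseq g r)) (fun (_ : unit) => l X g) s t).

(* A lax extension L commutes with restriction along maps:
   L (b (f -, g -)) = (L b) (F f -, F g -).  Every V-relation r : X -/-> Y is
   the restriction along inl and inr of its collage, the V-category on X + Y
   which is the identity on each summand, r from X to Y and bottom from Y to X;
   hence L is determined by its induced lifting, and I reflects the order.
   For the adjunction: when a is a V-category structure on X, the composite
   g . a of any g : kappa -/-> X lies above g and is a V-functor (X, a) -> V^kappa,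
   so every lambda in MP(Lb) yields Lb a <= hom (lambda g, lambda (g . a)),
   i.e. Lb <= I (F^MP(Lb)).  Conversely, if Lb <= I L, then for every s : F X
   the predicate lifting h |-> L h (s, -) of arity X lies in MP(Lb), and
   testing the Kantorovich extension with it at the identity bounds it by L. *)


Section QuantaleFacts.
Context {V : quantale}.
Implicit Types (a b c u v w : V) (S : V -> Prop).

Lemma qinf_lb S y : S y -> qle (qinf S) y.
Proof. intros Hy. apply qsup_least. intros x Hx. exact (Hx y Hy). Qed.

Lemma qinf_glb S x : (forall y, S y -> qle x y) -> qle x (qinf S).
Proof. intros H. apply qsup_ub. exact H. Qed.

Lemma qbot_le a : qle (qbot V) a.
Proof. apply qsup_least. intros x []. Qed.

Lemma qten_monor c a b : qle a b -> qle (qten c a) (qten c b).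
Proof.
  intros Hab.
  assert (Eb : b = qsup (fun v => v = a \/ v = b)).
  { apply qle_antisym.
    - apply qsup_ub. now right.
    - apply qsup_least. intros x [-> | ->]; [exact Hab | apply qle_refl]. }
  rewrite Eb, qten_sup. apply qsup_ub. exists a. split; [now left | reflexivity].
Qed.

Lemma qten_monol c a b : qle a b -> qle (qten a c) (qten b c).
Proof. intros Hab. rewrite (qten_comm _ a), (qten_comm _ b). now apply qten_monor. Qed.

Lemma qten_k_r a : qten a qk = a.
Proof. rewrite qten_comm. apply qten_k. Qed.

Lemma qten_bot_r a : qten a (qbot V) = qbot V.
Proof.
  apply qle_antisym; [|apply qbot_le].
  unfold qbot. rewrite qten_sup. apply qsup_least. intros x [y [[] _]].
Qed.

Lemma qten_bot_l a : qten (qbot V) a = qbot V.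
Proof. rewrite qten_comm. apply qten_bot_r. Qed.

Lemma qten_sup_le_r a S c : (forall x, S x -> qle (qten a x) c) -> qle (qten a (qsup S)) c.
Proof. intros H. rewrite qten_sup. apply qsup_least. intros v [x [Hx ->]]. now apply H. Qed.

Lemma qten_sup_le_l a S c : (forall x, S x -> qle (qten x a) c) -> qle (qten (qsup S) a) c.
Proof.
  intros H. rewrite qten_comm. apply qten_sup_le_r.
  intros x Hx. rewrite qten_comm. now apply H.
Qed.

Lemma qhomP u w v : qle (qten u w) v <-> qle w (qhom u v).
Proof.
  split; intros H.
  - now apply qsup_ub.
  - eapply qle_trans; [apply (qten_monor _ _ _ H)|].
    apply qten_sup_le_r. now intros x Hx.
Qed.

Lemma qten_hom_le u v : qle (qten u (qhom u v)) v.
Proof. apply qhomP, qle_refl. Qed.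

Lemma qhom_mono a a' b b' : qle a' a -> qle b b' -> qle (qhom a b) (qhom a' b').
Proof.
  intros Ha Hb. apply qhomP.
  eapply qle_trans; [apply (qten_monol _ _ _ Ha)|].
  eapply qle_trans; [apply qten_hom_le | exact Hb].
Qed.

Lemma qten_ge_l a b : qle qk a -> qle b (qten a b).
Proof. intros Ha. pose proof (qten_monol b _ _ Ha) as Hb. now rewrite qten_k in Hb. Qed.

Lemma qten_ge_r a b : qle qk b -> qle a (qten a b).
Proof. intros Hb. rewrite qten_comm. now apply qten_ge_l. Qed.

Lemma qhom_le a b : qle qk a -> qle (qhom a b) b.
Proof. intros Ha. eapply qle_trans; [apply (qten_ge_l _ _ Ha) | apply qten_hom_le]. Qed.

End QuantaleFacts.

Section Relations.
Context {V : quantale}.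

Lemma vgraph_refl {X Y} (f : X -> Y) x : qle qk (vgraph V f x (f x)).
Proof. now apply qsup_ub. Qed.

Lemma vgraph_le {X Y} (f : X -> Y) x y (w : V) :
  (f x = y -> qle qk w) -> qle (vgraph V f x y) w.
Proof. intros H. apply qsup_least. intros v [E ->]. now apply H. Qed.

Lemma vgraph_ten_le_l {X Y} (f : X -> Y) x y (w w' : V) :
  (f x = y -> qle w w') -> qle (qten (vgraph V f x y) w) w'.
Proof. intros H. apply qten_sup_le_l. intros v [E ->]. rewrite qten_k. now apply H. Qed.

Lemma vgraph_ten_le_r {X Y} (f : X -> Y) x y (w w' : V) :
  (f x = y -> qle w w') -> qle (qten w (vgraph V f x y)) w'.
Proof. intros H. rewrite qten_comm. now apply vgraph_ten_le_l. Qed.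

Lemma vseq_ub {X Y Z} (r : vrel V X Y) (s : vrel V Y Z) x y z :
  qle (qten (r x y) (s y z)) (vseq r s x z).
Proof. apply qsup_ub. now exists y. Qed.

Lemma vseq_least {X Y Z} (r : vrel V X Y) (s : vrel V Y Z) x z (w : V) :
  (forall y, qle (qten (r x y) (s y z)) w) -> qle (vseq r s x z) w.
Proof. intros H. apply qsup_least. intros v [y ->]. apply H. Qed.

Lemma vseq_assoc_le {K X Y Z} (g : vrel V K X) (r : vrel V X Y) (s : vrel V Y Z) :
  vle (vseq (vseq g r) s) (vseq g (vseq r s)).
Proof.
  intros i z. apply vseq_least. intros y. apply qten_sup_le_l. intros v [x ->].
  rewrite <- qten_assoc.
  eapply qle_trans; [apply qten_monor, (vseq_ub r s x y z) | apply vseq_ub].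
Qed.

Lemma vseq_graph_l {X Y Z} (f : X -> Y) (s : vrel V Y Z) :
  vle (vseq (vgraph V f) s) (fun x z => s (f x) z).
Proof.
  intros x z. apply vseq_least. intros y.
  apply vgraph_ten_le_l. intros <-. apply qle_refl.
Qed.

Lemma vseq_convgraph_l {X Y Z} (f : X -> Y) (s : vrel V Y Z) :
  vle (vseq (vconv (vgraph V f)) (fun x z => s (f x) z)) s.
Proof.
  intros y z. apply vseq_least. intros x.
  apply vgraph_ten_le_l. intros <-. apply qle_refl.
Qed.

Lemma vseq_graph_r {X Y Z} (f : Y -> X) (s : vrel V Z X) :
  vle (vseq (fun z y => s z (f y)) (vgraph V f)) s.
Proof.
  intros z x. apply vseq_least. intros y.
  apply vgraph_ten_le_r. intros <-. apply qle_refl.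
Qed.

Lemma vseq_convgraph_r {X Y Z} (f : Y -> X) (s : vrel V Z X) :
  vle (vseq s (vconv (vgraph V f))) (fun z y => s z (f y)).
Proof.
  intros z y. apply vseq_least. intros x.
  apply vgraph_ten_le_r. intros <-. apply qle_refl.
Qed.

Lemma vle_vseq_refl {K X} (g : vrel V K X) (a : vrel V X X) :
  (forall x, qle qk (a x x)) -> vle g (vseq g a).
Proof.
  intros Ha i x. eapply qle_trans; [|apply (vseq_ub g a i x x)].
  now apply qten_ge_r.
Qed.

Lemma vseq_le_of_vfunctor {K X} (g : vrel V K X) (a : vrel V X X) :
  vfunctor a (@vpow V K) (fun x i => g i x) -> vle (vseq g a) g.
Proof.
  intros Hg i x'. apply vseq_least. intros x. apply qhomP.
  eapply qle_trans; [apply Hg|]. apply qinf_lb. now exists i.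
Qed.

Lemma vfunctor_vseq {K X} (g : vrel V K X) (a : vrel V X X) :
  (forall x y z, qle (qten (a x y) (a y z)) (a x z)) ->
  vfunctor a (@vpow V K) (fun x i => vseq g a i x).
Proof.
  intros Htrans x x'. apply qinf_glb. intros v [i ->].
  apply qhomP. apply qten_sup_le_l. intros w [y ->].
  rewrite <- qten_assoc.
  eapply qle_trans; [apply qten_monor, Htrans | apply vseq_ub].
Qed.

Definition collage {X Y} (r : vrel V X Y) : vrel V (X + Y) (X + Y) :=
  fun p q => match p, q with
  | inl x, inl x' => vgraph V (fun z => z) x x'
  | inr y, inr y' => vgraph V (fun z => z) y y'
  | inl x, inr y => r x y
  | inr _, inl _ => qbot V
  end.

Lemma collage_vcat {X Y} (r : vrel V X Y) : is_vcat (collage r).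
Proof.
  split.
  - intros [x | y]; apply vgraph_refl.
  - intros [x | y] [x' | y'] [x'' | y'']; simpl;
      first [ rewrite qten_bot_l; apply qbot_le
            | rewrite qten_bot_r; apply qbot_le
            | apply vgraph_ten_le_l; intros <-; apply qle_refl
            | apply vgraph_ten_le_r; intros <-; apply qle_refl ].
Qed.

End Relations.

Section LaxExtension.
Context {V : quantale} {F : setfunctor} {L : laxstr V F}.
Hypothesis HL : is_laxext L.

Lemma laxext_mono {X Y} (r r' : vrel V X Y) : vle r r' -> vle (L X Y r) (L X Y r').
Proof. apply (proj1 HL). Qed.

Lemma laxext_ext {X Y} (r r' : vrel V X Y) u v :
  (forall x y, r x y = r' x y) -> L X Y r u v = L X Y r' u v.
Proof.
  intros E. apply qle_antisym; apply laxext_mono; intros x y; rewrite E; apply qle_refl.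
Qed.

Lemma laxext_ten_le {X Y Z} (r : vrel V X Y) (s : vrel V Y Z) u v w :
  qle (qten (L X Y r u v) (L Y Z s v w)) (L X Z (vseq r s) u w).
Proof. eapply qle_trans; [apply vseq_ub | apply (proj1 (proj2 HL))]. Qed.

Lemma laxext_graph {X Y} (f : X -> Y) u : qle qk (L X Y (vgraph V f) u (Fmap f u)).
Proof.
  eapply qle_trans; [apply (vgraph_refl (Fmap f) u) | apply (proj1 (proj2 (proj2 HL) X Y f))].
Qed.

Lemma laxext_convgraph {X Y} (f : X -> Y) u :
  qle qk (L Y X (vconv (vgraph V f)) (Fmap f u) u).
Proof.
  eapply qle_trans; [apply (vgraph_refl (Fmap f) u) | apply (proj2 (proj2 (proj2 HL) X Y f))].
Qed.

Lemma laxext_precomp {X Y Z} (f : X -> Y) (s : vrel V Y Z) u w :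
  L X Z (fun x z => s (f x) z) u w = L Y Z s (Fmap f u) w.
Proof.
  apply qle_antisym.
  - eapply qle_trans; [apply (qten_ge_l _ _ (laxext_convgraph f u))|].
    eapply qle_trans; [apply laxext_ten_le|].
    apply laxext_mono, vseq_convgraph_l.
  - eapply qle_trans; [apply (qten_ge_l _ _ (laxext_graph f u))|].
    eapply qle_trans; [apply laxext_ten_le|].
    apply laxext_mono, vseq_graph_l.
Qed.

Lemma laxext_postcomp {X Y Z} (f : Y -> X) (s : vrel V Z X) w u :
  L Z Y (fun z y => s z (f y)) w u = L Z X s w (Fmap f u).
Proof.
  apply qle_antisym.
  - eapply qle_trans; [apply (qten_ge_r _ _ (laxext_graph f u))|].
    eapply qle_trans; [apply laxext_ten_le|].
    apply laxext_mono, vseq_graph_r.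
  - eapply qle_trans; [apply (qten_ge_r _ _ (laxext_convgraph f u))|].
    eapply qle_trans; [apply laxext_ten_le|].
    apply laxext_mono, vseq_convgraph_r.
Qed.

Lemma laxext_comap {X X' Y Y'} (f : X -> X') (g : Y -> Y') (b : vrel V X' Y') u v :
  L X Y (fun x y => b (f x) (g y)) u v = L X' Y' b (Fmap f u) (Fmap g v).
Proof. rewrite (laxext_precomp f (fun x' y => b x' (g y))). apply laxext_postcomp. Qed.

Lemma laxext_refl {X} (a : vrel V X X) :
  (forall x, qle qk (a x x)) -> forall u, qle qk (L X X a u u).
Proof.
  intros Ha u. pose proof (laxext_graph (fun x : X => x) u) as Hid.
  rewrite Fmap_id in Hid. eapply qle_trans; [exact Hid|].
  apply laxext_mono. intros x y. apply vgraph_le. intros <-. apply Ha.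
Qed.

Lemma laxext_trans {X} (a : vrel V X X) :
  (forall x y z, qle (qten (a x y) (a y z)) (a x z)) ->
  forall u v w, qle (qten (L X X a u v) (L X X a v w)) (L X X a u w).
Proof.
  intros Ha u v w. eapply qle_trans; [apply laxext_ten_le|].
  apply laxext_mono. intros x z. apply vseq_least. intros y. apply Ha.
Qed.

Lemma induced_lifting_I : is_lifting_I (induced L).
Proof.
  split; [split|]; unfold induced.
  - intros X a [Hrefl Htrans]. split; [now apply laxext_refl | now apply laxext_trans].
  - intros X Y a b f _ _ Hf u v. rewrite <- laxext_comap. now apply laxext_mono.
  - intros X Y a b f _ _ Hf u v. rewrite <- laxext_comap. now apply laxext_ext.
Qed.

Lemma laxext_collage {X Y} (r : vrel V X Y) u v :
  L X Y r u v = L (X + Y)%type (X + Y)%type (collage r) (Fmap inl u) (Fmap inr v).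
Proof. exact (laxext_comap inl inr (collage r) u v). Qed.

End LaxExtension.

Lemma laxext_le_of_induced_le {V F} (L L' : laxstr V F) :
  is_laxext L -> is_laxext L' -> lift_le (induced L) (induced L') -> laxext_le L L'.
Proof.
  intros HL HL' Hle X Y r u v.
  rewrite (laxext_collage HL), (laxext_collage HL').
  exact (Hle _ _ (collage_vcat r) _ _).
Qed.

Section Kantorovich.
Context {V : quantale} {F : setfunctor} {Lam : plclass V F}.

Lemma kantorovich_le_hom {X Y} (r : vrel V X Y) s t
    {kappa} {l : predlift V F kappa} (g : vrel V kappa X) :
  Lam kappa l -> qle (kantorovich Lam r s t) (qhom (l X g s) (l Y (vseq g r) t)).
Proof.
  intros Hl. eapply qle_trans.
  - apply qinf_lb. exists kappa, l, g. split; [exact Hl | reflexivity].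
  - apply qinf_lb. now exists tt.
Qed.

Lemma kantorovich_glb {X Y} (r : vrel V X Y) s t (w : V) :
  (forall kappa l g, Lam kappa l -> qle w (qhom (l X g s) (l Y (vseq g r) t))) ->
  qle w (kantorovich Lam r s t).
Proof.
  intros H. apply qinf_glb. intros y [kappa [l [g [Hl ->]]]].
  apply qinf_glb. intros y [[] ->]. now apply H.
Qed.

Hypothesis HLam : forall kappa l, Lam kappa l -> pl_natural l /\ pl_monotone l.

Lemma kantorovich_mono {X Y} (r r' : vrel V X Y) :
  vle r r' -> vle (kantorovich Lam r) (kantorovich Lam r').
Proof.
  intros Hr s t. apply kantorovich_glb. intros kappa l g Hl.
  eapply qle_trans; [apply (kantorovich_le_hom r s t g Hl)|].
  apply qhom_mono; [apply qle_refl|]. apply (proj2 (HLam _ _ Hl)).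
  intros i y. apply vseq_least. intros x.
  eapply qle_trans; [apply qten_monor, Hr | apply vseq_ub].
Qed.

Lemma kantorovich_seq {X Y Z} (r : vrel V X Y) (s : vrel V Y Z) :
  vle (vseq (kantorovich Lam r) (kantorovich Lam s)) (kantorovich Lam (vseq r s)).
Proof.
  intros u w. apply vseq_least. intros v. apply kantorovich_glb. intros kappa l g Hl.
  apply (proj1 (qhomP _ _ _)). rewrite qten_assoc.
  eapply qle_trans.
  { apply qten_monol. eapply qle_trans; [apply qten_monor, (kantorovich_le_hom r u v g Hl)|].
    apply qten_hom_le. }
  eapply qle_trans; [apply qten_monor, (kantorovich_le_hom s v w (vseq g r) Hl)|].
  eapply qle_trans; [apply qten_hom_le|].
  apply (proj2 (HLam _ _ Hl)), vseq_assoc_le.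
Qed.

Lemma kantorovich_graph {X Y} (f : X -> Y) :
  vle (vgraph V (Fmap f)) (kantorovich Lam (vgraph V f)) /\
  vle (vconv (vgraph V (Fmap f))) (kantorovich Lam (vconv (vgraph V f))).
Proof.
  split.
  - intros u t. apply vgraph_le. intros <-. apply kantorovich_glb. intros kappa l g Hl.
    destruct (HLam _ _ Hl) as [Hnat Hmono].
    apply qhomP. rewrite qten_k_r, <- Hnat. apply Hmono. intros i x.
    eapply qle_trans; [|apply (vseq_ub g (vgraph V f) i x (f x))].
    apply qten_ge_r, vgraph_refl.
  - intros t u. apply vgraph_le. intros <-. apply kantorovich_glb. intros kappa l g Hl.
    destruct (HLam _ _ Hl) as [Hnat Hmono].
    apply qhomP. rewrite qten_k_r, <- Hnat. apply Hmono. intros i x.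
    eapply qle_trans; [|apply (vseq_ub g (vconv (vgraph V f)) i (f x) x)].
    apply qten_ge_r, (vgraph_refl f x).
Qed.

Lemma kantorovich_laxext : is_laxext (kantorovich Lam).
Proof.
  split; [|split].
  - intros X Y. apply kantorovich_mono.
  - intros X Y Z. apply kantorovich_seq.
  - intros X Y. apply kantorovich_graph.
Qed.

End Kantorovich.

Lemma kantorovich_antitone {V F} (Lam Lam' : plclass V F) :
  (forall kappa l, Lam' kappa l -> Lam kappa l) ->
  laxext_le (kantorovich Lam) (kantorovich Lam').
Proof.
  intros Hsub X Y r s t. apply kantorovich_glb. intros kappa l g Hl.
  now apply kantorovich_le_hom, Hsub.
Qed.

Section CompatiblePredicateLiftings.
Context {V : quantale} {F : setfunctor}.

Lemma pl_compatible_antitone {kappa} (Lb Lb' : liftstr V F) (l : predlift V F kappa) :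
  lift_le Lb Lb' -> pl_compatible Lb' l -> pl_compatible Lb l.
Proof.
  intros Hle Hc X a g Ha Hg u v.
  eapply qle_trans; [apply (Hle X a Ha) | now apply Hc].
Qed.

Lemma MP_antitone (Lb Lb' : liftstr V F) {kappa} (l : predlift V F kappa) :
  lift_le Lb Lb' -> MP Lb' l -> MP Lb l.
Proof.
  intros Hle [Hnat [Hmono Hc]].
  split; [exact Hnat | split; [exact Hmono | exact (pl_compatible_antitone _ _ _ Hle Hc)]].
Qed.

Lemma lift_le_induced_kantorovich (Lb : liftstr V F) :
  lift_le Lb (induced (kantorovich (MP Lb))).
Proof.
  intros X a [Hrefl Htrans] u v. apply kantorovich_glb.
  intros kappa l g [_ [Hmono Hc]].
  eapply qle_trans; [apply (Hc X a (vseq g a) (conj Hrefl Htrans) (vfunctor_vseq g a Htrans))|].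
  apply qhom_mono; [|apply qle_refl].
  apply Hmono, vle_vseq_refl, Hrefl.
Qed.

Definition laxext_predlift (L : laxstr V F) {X} (s : F X) : predlift V F X :=
  fun Z h => L X Z h s.

Lemma laxext_predlift_MP (Lb : liftstr V F) (L : laxstr V F) {X} (s : F X) :
  is_laxext L -> lift_le Lb (induced L) -> MP Lb (laxext_predlift L s).
Proof.
  intros HL Hle. split; [|split].
  - intros Z W f g t. apply (laxext_postcomp HL).
  - intros Z g g' Hg. now apply (laxext_mono HL).
  - intros Z a g Ha Hg u u'. apply qhomP.
    eapply qle_trans; [apply qten_monor, (Hle Z a Ha)|].
    eapply qle_trans; [apply (laxext_ten_le HL)|].
    now apply (laxext_mono HL), vseq_le_of_vfunctor.
Qed.

Lemma kantorovich_MP_le (Lb : liftstr V F) (L : laxstr V F) :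
  is_laxext L -> lift_le Lb (induced L) -> laxext_le (kantorovich (MP Lb)) L.
Proof.
  intros HL Hle X Y r s t.
  eapply qle_trans;
    [exact (kantorovich_le_hom r s t (vgraph V (fun x => x)) (laxext_predlift_MP Lb L s HL Hle))|].
  unfold laxext_predlift.
  eapply qle_trans; [apply qhom_le, (laxext_refl HL), vgraph_refl|].
  apply (laxext_mono HL), (vseq_graph_l (fun x => x) r).
Qed.

End CompatiblePredicateLiftings.

Theorem theorem6 (V : quantale) (F : setfunctor) :
  nontrivial V ->
  (* I : Lax(F) -> Lift(F)_I is a well-defined monotone map *)
  (forall L : laxstr V F, is_laxext L -> is_lifting_I (induced L)) /\
  (forall L L' : laxstr V F, is_laxext L -> is_laxext L' ->
      laxext_le L L' -> lift_le (induced L) (induced L')) /\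
  (* F^{MP(-)} : Lift(F)_I -> Lax(F) is a well-defined monotone map *)
  (forall Lb : liftstr V F, is_lifting_I Lb -> is_laxext (kantorovich (MP Lb))) /\
  (forall Lb Lb' : liftstr V F, is_lifting_I Lb -> is_lifting_I Lb' ->
      lift_le Lb Lb' -> laxext_le (kantorovich (MP Lb)) (kantorovich (MP Lb'))) /\
  (* I is order-reflecting *)
  (forall L L' : laxstr V F, is_laxext L -> is_laxext L' ->
      lift_le (induced L) (induced L') -> laxext_le L L') /\
  (* F^{MP(-)} -| I *)
  (forall (Lb : liftstr V F) (L : laxstr V F), is_lifting_I Lb -> is_laxext L ->
      (laxext_le (kantorovich (MP Lb)) L <-> lift_le Lb (induced L))).
Proof.
  intros _. split; [|split; [|split; [|split; [|split]]]].
  - intros L HL. exact (induced_lifting_I HL).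
  - intros L L' _ _ Hle X a _. apply Hle.
  - intros Lb _. apply kantorovich_laxext. now intros kappa l [Hnat [Hmono _]].
  - intros Lb Lb' _ _ Hle. apply kantorovich_antitone. intros kappa l. now apply MP_antitone.
  - now apply laxext_le_of_induced_le.
  - intros Lb L _ HL. split.
    + intros HK X a Ha u v.
      eapply qle_trans; [apply (lift_le_induced_kantorovich Lb X a Ha) | apply HK].
    + now apply kantorovich_MP_le.
Qed.
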